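(* If $X$ is a Banach space such that $X$ or $X^*$ has property $(\alpha)$, then $X$ satisfies property $(A_d)$ for every integer $d\ge2$.
   Context: Let $(r_i)$ be independent Rademacher variables on $(\Omega_0,\mathbb{P})$; $\mathrm{Rad}(Z)$ is the closure in $L^2(\Omega_0;Z)$ of finite sums $\sum r_i\otimes z_i$. Property $(\alpha)$: there is $C$ with $\|\sum_{i,j\le n}a_{ij}r_i\otimes r_j\otimes x_{ij}\|_{\mathrm{Rad}(\mathrm{Rad}(X))}\le C\sup|a_{ij}|\,\|\sum_{i,j\le n}r_i\otimes r_j\otimes x_{ij}\|_{\mathrm{Rad}(\mathrm{Rad}(X))}$ for all $n$, complex $a_{ij}$ and $x_{ij}\in X$. For a finite family $(x_{i_1,\ldots,i_d})$ in $Z$, $N_d([x_{i_1,\ldots,i_d}])=\left(\int_{\Omega_0^d}\|\sum r_{i_1}(t_1)\cdots r_{i_d}(t_d)x_{i_1,\ldots,i_d}\|^2d\mathbb{P}^d\right)^{1/2}$. $X$ has property $(A_d)$ if there is $C>0$ with $|\sum a_{i_1,\ldots,i_d}\langle x^*_{i_1,\ldots,i_d},x_{i_1,\ldots,i_d}\rangle|\le C\sup|a_{i_1,\ldots,i_d}|\,N_d([x_{i_1,\ldots,i_d}])\,N_d([x^*_{i_1,\ldots,i_d}])$ for all finite families of scalars, $x_{i_1,\ldots,i_d}\in X$, $x^*_{i_1,\ldots,i_d}\in X^*$. *)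

From HB Require Import structures.
From mathcomp Require Import all_boot all_order all_algebra.
From mathcomp Require Import complex.
From mathcomp Require Import all_classical all_reals all_analysis.
Import Order.TTheory GRing.Theory Num.Theory numFieldNormedType.Exports.

Set Implicit Arguments.
Unset Strict Implicit.
Unset Printing Implicit Defensive.

Local Open Scope ring_scope.
Local Open Scope complex_scope.
Local Open Scope classical_set_scope.

Section Rademacher.
Variable R : realType.

(* value of a Rademacher variable on the atom given by a sign bit *)
Definition rsign (b : bool) : R[i] := if b then 1 else -1.

(* Rad(Rad(Z))-norm of the finite sum sum_{i,j<n} r_i (x) r_j (x) x_ij, for a
   vector space V with a (real-valued) norm nrm.  Since the integrand only
   depends on (r_1(t),..,r_n(t)) and (r_1(s),..,r_n(s)), which are i.i.d.
   uniform on {-1,1}, the double L^2 integral is the average over sign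
   vectors. *)
Definition radrad (V : lmodType R[i]) (nrm : V -> R) (n : nat)
    (x : 'I_n -> 'I_n -> V) : R :=
  Num.sqrt ((#|{ffun 'I_n -> bool}|%:R ^+ 2)^-1 *
    \sum_(e1 : {ffun 'I_n -> bool}) \sum_(e2 : {ffun 'I_n -> bool})
      nrm (\sum_(i < n) \sum_(j < n) (rsign (e1 i) * rsign (e2 j)) *: x i j) ^+ 2).

(* N_d of a finite family (x_{i_1,...,i_d}) indexed by multi-indices
   i : 'I_d -> 'I_n, i.e. the L^2(Omega_0^d; Z)-norm of
   sum r_{i_1}(t_1) ... r_{i_d}(t_d) x_{i_1..i_d}, written as the average over
   the 2^(n d) sign configurations e : 'I_d -> ('I_n -> bool). *)
Definition Nd (V : lmodType R[i]) (nrm : V -> R) (d n : nat)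
    (x : {ffun 'I_d -> 'I_n} -> V) : R :=
  Num.sqrt ((#|{ffun 'I_d -> {ffun 'I_n -> bool}}|%:R)^-1 *
    \sum_(e : {ffun 'I_d -> {ffun 'I_n -> bool}})
      nrm (\sum_(i : {ffun 'I_d -> 'I_n})
             (\prod_(k < d) rsign (e k (i k))) *: x i) ^+ 2).

Definition property_alpha (V : lmodType R[i]) (P : V -> Prop) (nrm : V -> R) :=
  exists C : R, forall (n : nat) (a : 'I_n -> 'I_n -> R[i])
    (x : 'I_n -> 'I_n -> V), (forall i j, P (x i j)) ->
    radrad nrm (fun i j => a i j *: x i j)
      <= C * (\big[Num.max/0]_(i < n) \big[Num.max/0]_(j < n) complex.Re `|a i j|)
           * radrad nrm x.

Section Banach.
Variable X : completeNormedModType R[i].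

Definition normX (x : X) : R := complex.Re `|x|.

Definition is_dual (f : X -> R[i]) : Prop :=
  (forall (a : R[i]) (x y : X), f (a *: x + y) = a * f x + f y) /\ continuous (f : X -> (R[i] : numFieldType)^o).

Definition dual_norm (f : X -> R[i]) : R :=
  sup [set complex.Re `|f x| | x in [set x : X | normX x <= 1]].

Definition property_A (d : nat) : Prop :=
  exists C : R, 0 < C /\
    forall (n : nat) (a : {ffun 'I_d -> 'I_n} -> R[i])
      (x : {ffun 'I_d -> 'I_n} -> X) (xs : {ffun 'I_d -> 'I_n} -> (X -> R[i])),
      (forall i, is_dual (xs i)) ->
      complex.Re `|\sum_(i : {ffun 'I_d -> 'I_n}) a i * xs i (x i)|
        <= C * (\big[Num.max/0]_(i : {ffun 'I_d -> 'I_n}) complex.Re `|a i|)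
             * Nd normX x * Nd dual_norm xs.

End Banach.
End Rademacher.

From HB Require Import structures.
From mathcomp Require Import all_boot all_order all_algebra.
From mathcomp Require Import complex.
From mathcomp Require Import all_classical all_reals all_analysis.
From mathcomp Require Import ring.
Import Order.TTheory GRing.Theory Num.Theory numFieldNormedType.Exports.

Set Implicit Arguments.
Unset Strict Implicit.
Unset Printing Implicit Defensive.

Local Open Scope ring_scope.
Local Open Scope complex_scope.

(* For a family x' of functionals, orthogonality of the Walsh functions
   w_e(i) = r_{i_1}(t_1) ... r_{i_d}(t_d) gives
     sum_i <x'_i, x_i> = E_e < sum_i w_e(i) x'_i, sum_j w_e(j) x_j >,
   hence |sum_i <x'_i, x_i>| <= N_d(x') N_d(x) by Cauchy-Schwarz.  The
   coefficients a_i are absorbed into x (or into x'), so what is needed is that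
   N_d admits bounded multipliers on a space with property (alpha).  Averaging
   the (alpha) inequality over independent signs eps_ij shows that Rad(Rad(Z))
   is equivalent to the Rademacher norm over the product index set; peeling off
   one coordinate at a time, N_d becomes equivalent to the Rademacher norm of
   the family indexed by multi-indices, which admits bounded multipliers by
   (alpha) applied to diagonal matrices. *)

Section Averages.
Variable R : realType.

Definition avg (S : finType) (f : S -> R) : R := #|S|%:R^-1 * \sum_s f s.

Lemma avg_ge0 (S : finType) (f : S -> R) : (forall s, 0 <= f s) -> 0 <= avg f.
Proof. by move=> f0; rewrite mulr_ge0 ?invr_ge0 ?ler0n ?sumr_ge0. Qed.

Lemma ler_avg (S : finType) (f g : S -> R) :
  (forall s, f s <= g s) -> avg f <= avg g.
Proof. by move=> fg; rewrite ler_wpM2l ?invr_ge0 ?ler0n ?ler_sum. Qed.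

Lemma eq_avg (S : finType) (f g : S -> R) : f =1 g -> avg f = avg g.
Proof. by move=> fg; rewrite /avg (eq_bigr _ (fun s _ => fg s)). Qed.

Lemma avgZ (S : finType) (k : R) (f : S -> R) :
  avg (fun s => k * f s) = k * avg f.
Proof. by rewrite /avg -mulr_sumr mulrCA. Qed.

Lemma avg_cst (S : finType) (k : R) : (0 < #|S|)%N -> avg (fun _ : S => k) = k.
Proof.
move=> S0; rewrite /avg sumr_const; change (#|S|%:R^-1 * (k *+ #|S|) = k).
by rewrite -[k *+ _]mulr_natr mulrCA mulVf ?mulr1 // pnatr_eq0 -lt0n.
Qed.

Lemma avg_reindex (S T : finType) (h : S -> T) (f : T -> R) :
  bijective h -> avg (fun s => f (h s)) = avg f.
Proof.
by move=> hb; rewrite /avg (bij_eq_card hb) (reindex h) //; apply: onW_bij.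
Qed.

Lemma avg_pair (S T : finType) (F : S -> T -> R) :
  avg (fun p : S * T => F p.1 p.2) = avg (fun s => avg (F s)).
Proof.
rewrite /avg card_prod natrM invfM -mulrA -mulr_sumr pair_bigA.
by congr (_ * _); apply: eq_bigr => s _; rewrite mulr_sumr.
Qed.

Lemma exchange_avg (S T : finType) (F : S -> T -> R) :
  avg (fun s => avg (F s)) = avg (fun t => avg (F^~ t)).
Proof.
have avg2E (A B : finType) (G : A -> B -> R) :
    avg (fun a => avg (G a)) = \sum_a \sum_b #|A|%:R^-1 * (#|B|%:R^-1 * G a b).
  by rewrite /avg mulr_sumr; apply: eq_bigr => a _; rewrite !mulr_sumr.
rewrite !avg2E exchange_big /=; apply: eq_bigr => t _; apply: eq_bigr => s _.
exact: mulrCA.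
Qed.

Lemma cauchy_schwarz (T : finType) (u v : T -> R) :
  \sum_i u i * v i <= Num.sqrt (\sum_i u i ^+ 2) * Num.sqrt (\sum_i v i ^+ 2).
Proof.
set A := \sum_i u i ^+ 2; set B := \sum_i v i ^+ 2; set S := \sum_i u i * v i.
have A0 : 0 <= A by rewrite sumr_ge0 // => i _; rewrite sqr_ge0.
have B0 : 0 <= B by rewrite sumr_ge0 // => i _; rewrite sqr_ge0.
suff S2 : S ^+ 2 <= A * B.
  have [S0|S0] := lerP S 0; first by rewrite (le_trans S0) ?mulr_ge0 ?sqrtr_ge0.
  by rewrite -sqrtrM // -[S](ger0_norm (ltW S0)) -sqrtr_sqr ler_wsqrtr.
have [B_eq0|B_neq0] := eqVneq B 0.
  have v0 i : v i = 0.
    by apply/eqP; rewrite -sqrf_eq0; apply/eqP/(psumr_eq0P _ B_eq0) => // j _; rewrite sqr_ge0.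
  by rewrite /S big1 ?expr0n ?mulr_ge0 // => i _; rewrite v0 mulr0.
have : 0 <= \sum_i (B * u i - S * v i) ^+ 2 by rewrite sumr_ge0 // => i _; rewrite sqr_ge0.
have -> : \sum_i (B * u i - S * v i) ^+ 2 = B * (A * B - S ^+ 2).
  transitivity (\sum_i (B ^+ 2 * u i ^+ 2 - 2 * B * S * (u i * v i) + S ^+ 2 * v i ^+ 2)).
    by apply: eq_bigr => i _; ring.
  by rewrite big_split sumrB /= -!mulr_sumr -/A -/B -/S; ring.
by rewrite pmulr_rge0 ?subr_ge0 // lt0r B_neq0.
Qed.

End Averages.

Section ComplexNorm.
Variable R : realType.

Definition cnorm (z : R[i]) : R := complex.Re `|z|.

Lemma cnormE (z : R[i]) : `|z| = (cnorm z)%:C.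
Proof. by rewrite /cnorm normc_def. Qed.

Lemma cnorm_ge0 z : 0 <= cnorm z.
Proof. by rewrite -ler0c -cnormE. Qed.

Lemma cnorm0 : cnorm 0 = 0.
Proof. by rewrite /cnorm normr0. Qed.

Lemma cnormM z w : cnorm (z * w) = cnorm z * cnorm w.
Proof. by rewrite /cnorm normrM [`|z|]cnormE [`|w|]cnormE /= !mulr0 subr0. Qed.

Lemma ler_cnormD z w : cnorm (z + w) <= cnorm z + cnorm w.
Proof. by have := ler_normD z w; rewrite !cnormE -rmorphD lecR. Qed.

Lemma ler_cnorm_sum (T : finType) (F : T -> R[i]) :
  cnorm (\sum_i F i) <= \sum_i cnorm (F i).
Proof.
elim/big_ind2: _ => [|a b c e ab ce|//]; first by rewrite cnorm0.
by rewrite (le_trans (ler_cnormD _ _)) ?lerD.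
Qed.

Lemma cnorm_real (r : R) : cnorm r%:C = `|r|.
Proof. by rewrite /cnorm normc_def /= expr0n /= addr0 sqrtr_sqr. Qed.

End ComplexNorm.

Section SignVectors.
Variable R : realType.
Local Notation rs := (rsign R).

Lemma cnorm_rsign b : cnorm (rs b) = 1.
Proof. by case: b; rewrite /cnorm /rsign ?normrN normr1. Qed.

Lemma rsign_eqb b c : rs (b == c) = rs b * rs c.
Proof. by case: b; case: c; rewrite /rsign ?mulr1 ?mul1r ?mulrNN ?mulr1. Qed.

Lemma rsignMss b : rs b * rs b = 1.
Proof. by case: b; rewrite /rsign ?mulr1 ?mulrNN ?mulr1. Qed.

Lemma card_signs_gt0 (T : finType) : (0 < #|{ffun T -> bool}|)%N.
Proof. by apply/card_gt0P; exists [ffun _ => true]. Qed.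

Definition flip (T : finType) (s u : {ffun T -> bool}) : {ffun T -> bool} :=
  [ffun i => u i == s i].

Lemma flipK (T : finType) (s : {ffun T -> bool}) : involutive (flip s).
Proof. by move=> u; apply/ffunP => i; rewrite !ffunE; case: (u i); case: (s i). Qed.

Lemma rsign_flip (T : finType) (s u : {ffun T -> bool}) i :
  rs (flip s u i) = rs (u i) * rs (s i).
Proof. by rewrite ffunE rsign_eqb. Qed.

Lemma avg_flip (T : finType) (s : {ffun T -> bool}) (F : {ffun T -> bool} -> R) :
  avg (fun u => F (flip s u)) = avg F.
Proof. by apply: avg_reindex; exists (flip s); apply: flipK. Qed.

Definition precomp (T T' : finType) (A : Type) (h : T' -> T) (e : {ffun T -> A}) :
  {ffun T' -> A} := [ffun i => e (h i)].

Lemma avg_precomp (T T' A : finType) (h : T' -> T) (F : {ffun T' -> A} -> R) :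
  bijective h -> avg (fun e => F (precomp h e)) = avg F.
Proof.
case=> g hg gh; apply: avg_reindex; exists (precomp g) => e.
  by apply/ffunP => i; rewrite !ffunE gh.
by apply/ffunP => i; rewrite !ffunE hg.
Qed.

Lemma avg_split (A B : finType) (F : {ffun A -> bool} -> {ffun B -> bool} -> R) :
  avg (fun e : {ffun (A + B)%type -> bool} => F (precomp inl e) (precomp inr e)) =
  avg (fun g => avg (F g)).
Proof.
have join_bij : bijective (fun p : {ffun A -> bool} * {ffun B -> bool} =>
    [ffun s => if s is inl a then p.1 a else if s is inr b then p.2 b else false]).
  exists (fun e => (precomp inl e, precomp inr e)).
    by case=> g k /=; congr (_, _); apply/ffunP => i; rewrite !ffunE.
  by move=> e; apply/ffunP; case=> a; rewrite !ffunE.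
rewrite -(avg_reindex _ join_bij) -avg_pair; apply: eq_avg => -[g k] /=.
by congr F; apply/ffunP => i; rewrite !ffunE.
Qed.

Lemma avg_split_l (A B : finType) (F : {ffun A -> bool} -> R) :
  avg (fun e : {ffun (A + B)%type -> bool} => F (precomp inl e)) = avg F.
Proof.
rewrite (avg_split (fun g (_ : {ffun B -> bool}) => F g)).
by apply: eq_avg => g; apply/avg_cst/card_signs_gt0.
Qed.

Lemma avg_split_r (A B : finType) (F : {ffun B -> bool} -> R) :
  avg (fun e : {ffun (A + B)%type -> bool} => F (precomp inr e)) = avg F.
Proof.
rewrite (avg_split (fun (_ : {ffun A -> bool}) k => F k)).
exact/avg_cst/card_signs_gt0.
Qed.

Definition walsh d n (e : {ffun 'I_d -> {ffun 'I_n -> bool}}) (i : {ffun 'I_d -> 'I_n}) :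
  R[i] := \prod_(k < d) rs (e k (i k)).

Lemma walsh_flip d n (s e : {ffun 'I_d -> {ffun 'I_n -> bool}}) i :
  walsh [ffun k => flip (s k) (e k)] i = walsh e i * walsh s i.
Proof. by rewrite /walsh -big_split; apply: eq_bigr => k _; rewrite ffunE rsign_flip. Qed.

Lemma sum_walshM d n (i j : {ffun 'I_d -> 'I_n}) :
  \sum_e walsh e i * walsh e j = (i == j)%:R * #|{ffun 'I_d -> {ffun 'I_n -> bool}}|%:R.
Proof.
have [<-|neq_ij] := eqVneq i j.
  rewrite mul1r -sumr_const; apply: eq_bigr => e _.
  by rewrite /walsh -big_split big1 // => k _; apply: rsignMss.
have [k neq_k] : exists k, i k != j k.
  apply/existsP; rewrite -negb_forall; apply: contra neq_ij => /forallP eq_ij.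
  by apply/eqP/ffunP => k; apply/eqP.
pose s := [ffun k' : 'I_d => [ffun t : 'I_n => ~~ ((k' == k) && (t == i k))]].
have walsh_s l : walsh s l = rs (l k != i k).
  rewrite /walsh (bigD1 k) //= big1 ?mulr1 => [|k' /negbTE nk]; rewrite !ffunE ?eqxx //.
  by rewrite nk.
(* [h] flips the sign at [(k, i k)], which changes the sign of every term *)
pose h (e : {ffun 'I_d -> {ffun 'I_n -> bool}}) := [ffun k' => flip (s k') (e k')].
have hK : involutive h by move=> e; apply/ffunP => k'; rewrite !ffunE flipK.
set S := \sum_e _; have : S = - S.
  rewrite {1}/S (reindex_inj (inv_inj hK)) -sumrN; apply: eq_bigr => e _.
  rewrite !walsh_flip !walsh_s eqxx eq_sym (negbTE neq_k) /rsign /=; ring.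
by move/eqP; rewrite -subr_eq0 opprK -mulr2n mulrn_eq0 mul0r => /eqP.
Qed.

End SignVectors.

Definition cons_ffun d (Z : Type) (z : Z) (e : {ffun 'I_d -> Z}) :
  {ffun 'I_d.+1 -> Z} :=
  [ffun t => if unlift ord0 t is Some k then e k else z].

Lemma cons_ffun0 d (Z : Type) (z : Z) (e : {ffun 'I_d -> Z}) :
  cons_ffun z e ord0 = z.
Proof. by rewrite ffunE unlift_none. Qed.

Lemma cons_ffunS d (Z : Type) (z : Z) (e : {ffun 'I_d -> Z}) k :
  cons_ffun z e (lift ord0 k) = e k.
Proof. by rewrite ffunE liftK. Qed.

Lemma cons_ffun_bij d (Z : finType) :
  bijective (fun p : Z * {ffun 'I_d -> Z} => cons_ffun p.1 p.2).
Proof.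
exists (fun e : {ffun 'I_d.+1 -> Z} => (e ord0, [ffun k => e (lift ord0 k)])).
  by case=> z e /=; rewrite cons_ffun0; congr (_, _); apply/ffunP => k; rewrite !ffunE liftK.
move=> e; apply/ffunP => t; rewrite ffunE /=.
by case: unliftP => [k ->|->]; rewrite ?ffunE.
Qed.

Section RademacherAverages.
Variable R : realType.
Local Notation rs := (rsign R).
Variables (V : lmodType R[i]) (nrm : V -> R).

Definition rad2 (T : finType) (x : T -> V) : R :=
  avg (fun e : {ffun T -> bool} => nrm (\sum_i rs (e i) *: x i) ^+ 2).

Definition radrad2 (T U : finType) (x : T -> U -> V) : R :=
  avg (fun e : {ffun T -> bool} => avg (fun f : {ffun U -> bool} =>
    nrm (\sum_i \sum_j (rs (e i) * rs (f j)) *: x i j) ^+ 2)).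

Definition Nd2 d n (x : {ffun 'I_d -> 'I_n} -> V) : R :=
  avg (fun e : {ffun 'I_d -> {ffun 'I_n -> bool}} =>
    nrm (\sum_i walsh R e i *: x i) ^+ 2).

Lemma radradE n (x : 'I_n -> 'I_n -> V) : radrad nrm x = Num.sqrt (radrad2 x).
Proof.
rewrite /radrad /radrad2 /avg expr2 invfM -mulrA mulr_sumr.
by congr (Num.sqrt (_ * _)); apply: eq_bigr.
Qed.

Lemma NdE d n (x : {ffun 'I_d -> 'I_n} -> V) : Nd nrm x = Num.sqrt (Nd2 x).
Proof. by []. Qed.

Lemma radrad2_ge0 (T U : finType) (x : T -> U -> V) : 0 <= radrad2 x.
Proof. by do 2!apply: avg_ge0 => ?; apply: sqr_ge0. Qed.

Lemma rad2_reindex (T T' : finType) (h : T' -> T) (x : T -> V) :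
  bijective h -> rad2 (fun i => x (h i)) = rad2 x.
Proof.
move=> hb; rewrite /rad2 -(avg_precomp _ hb); apply: eq_avg => e.
rewrite [in RHS](reindex h); last exact: onW_bij.
by congr (nrm _ ^+ 2); apply: eq_bigr => i _; rewrite ffunE.
Qed.

Lemma radrad2_reindex (T T' U U' : finType) (h : T' -> T) (k : U' -> U)
    (x : T -> U -> V) :
  bijective h -> bijective k -> radrad2 (fun i j => x (h i) (k j)) = radrad2 x.
Proof.
move=> hb kb; rewrite /radrad2 -(avg_precomp _ hb); apply: eq_avg => e.
rewrite -(avg_precomp _ kb); apply: eq_avg => f.
rewrite [in RHS](reindex h); last exact: onW_bij.
congr (nrm _ ^+ 2); apply: eq_bigr => i _.
rewrite [in RHS](reindex k); last exact: onW_bij.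
by apply: eq_bigr => j _; rewrite !ffunE.
Qed.

Definition corner (Z : zmodType) (T U : finType) (x : T -> U -> Z) :
  (T + U)%type -> (T + U)%type -> Z :=
  fun s t => if s is inl i then if t is inr j then x i j else 0 else 0.

Lemma radrad2_corner (T U : finType) (x : T -> U -> V) :
  radrad2 (corner x) = radrad2 x.
Proof.
rewrite /radrad2 -[RHS](@avg_split_l _ _ U); apply: eq_avg => e.
rewrite -[RHS](@avg_split_r _ T); apply: eq_avg => f.
congr (nrm _ ^+ 2); rewrite big_sumType /= [X in _ + X]big1 ?addr0; last first.
  by move=> j _; apply: big1 => t _; rewrite scaler0.
apply: eq_bigr => i _; rewrite big_sumType /= big1 ?add0r; last first.
  by move=> ? _; rewrite scaler0.
by apply: eq_bigr => j _; rewrite !ffunE.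
Qed.

Definition diagf (Z : zmodType) (T : finType) (x : T -> Z) : T -> T -> Z :=
  fun i j => if i == j then x i else 0.

Lemma radrad2_diag (T : finType) (x : T -> V) : radrad2 (diagf x) = rad2 x.
Proof.
rewrite /radrad2 -[RHS](avg_cst _ (card_signs_gt0 T)).
apply: eq_avg => e; rewrite -(avg_flip e); apply: eq_avg => f.
congr (nrm _ ^+ 2); apply: eq_bigr => i _.
rewrite (bigD1 i) //= /diagf eqxx big1 ?addr0; last first.
  by move=> j; rewrite eq_sym => /negbTE ->; rewrite scaler0.
by rewrite rsign_flip mulrCA rsignMss mulr1.
Qed.

Lemma avg_radrad2_signs (T U : finType) (x : T -> U -> V) :
  avg (fun u : {ffun (T * U)%type -> bool} =>
    radrad2 (fun i j => rs (u (i, j)) *: x i j)) =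
  rad2 (fun p : T * U => x p.1 p.2).
Proof.
rewrite /radrad2 exchange_avg -[RHS](avg_cst _ (card_signs_gt0 T)); apply: eq_avg => e.
rewrite exchange_avg -[RHS](avg_cst _ (card_signs_gt0 U)); apply: eq_avg => f.
rewrite /rad2 -[RHS](avg_flip [ffun p : T * U => e p.1 == f p.2]).
apply: eq_avg => u; congr (nrm _ ^+ 2).
rewrite pair_big /=; apply: eq_bigr => -[i j] _ /=.
by rewrite rsign_flip ffunE rsign_eqb scalerA mulrC.
Qed.

Lemma avg_rad2_signed_sum (T U : finType) (z : T -> U -> V) :
  avg (fun t : {ffun U -> bool} => rad2 (fun i => \sum_j rs (t j) *: z i j)) =
  radrad2 z.
Proof.
rewrite /radrad2 exchange_avg /rad2; apply: eq_avg => t; apply: eq_avg => u.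
congr (nrm _ ^+ 2); apply: eq_bigr => i _; rewrite scaler_sumr.
by apply: eq_bigr => j _; rewrite scalerA.
Qed.

Lemma Nd2_cons d n (x : {ffun 'I_d.+1 -> 'I_n} -> V) :
  Nd2 x = avg (fun t : {ffun 'I_n -> bool} =>
    Nd2 (fun j : {ffun 'I_d -> 'I_n} => \sum_i rs (t i) *: x (cons_ffun i j))).
Proof.
rewrite /Nd2 -(avg_reindex _ (cons_ffun_bij d {ffun 'I_n -> bool})) -avg_pair.
apply: eq_avg => -[t e] /=; congr (nrm _ ^+ 2).
rewrite (reindex _ (onW_bij _ (cons_ffun_bij d 'I_n))) /=.
rewrite -(pair_big xpredT xpredT (fun i j =>
  walsh R (cons_ffun t e) (cons_ffun i j) *: x (cons_ffun i j))) /=.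
rewrite exchange_big /=; apply: eq_bigr => j _; rewrite scaler_sumr.
apply: eq_bigr => i _; rewrite /walsh big_ord_recl !cons_ffun0 scalerA mulrC.
by congr (_ * _ *: _); apply: eq_bigr => k _; rewrite !cons_ffunS.
Qed.

Lemma Nd2_1 n (x : {ffun 'I_1 -> 'I_n} -> V) : Nd2 x = rad2 x.
Proof.
have hb : bijective (fun i : 'I_n => [ffun _ : 'I_1 => i]).
  exists (fun i : {ffun 'I_1 -> 'I_n} => i ord0) => [i|i]; first by rewrite ffunE.
  by apply/ffunP => k; rewrite ffunE (ord1 k).
have gb : bijective (fun g : {ffun 'I_n -> bool} => [ffun _ : 'I_1 => g]).
  exists (fun e : {ffun 'I_1 -> {ffun 'I_n -> bool}} => e ord0) => [g|e].
    by rewrite ffunE.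
  by apply/ffunP => k; rewrite ffunE (ord1 k).
rewrite -(rad2_reindex x hb) /Nd2 -(avg_reindex _ gb) /rad2; apply: eq_avg => g.
congr (nrm _ ^+ 2); rewrite (reindex _ (onW_bij _ hb)) /=; apply: eq_bigr => i _.
by rewrite /walsh big_ord1 !ffunE.
Qed.

End RademacherAverages.

Lemma sqr_norm_exp_odd (R : realDomainType) (x : R) d :
  (`|x| ^+ (2 * d).+1) ^+ 2 = (x ^+ 2) ^+ d * x ^+ 2 * (x ^+ 2) ^+ d.
Proof.
rewrite -exprM mulnC exprM real_normK ?num_real // -!exprM -!exprD.
by congr (_ ^+ _); ring.
Qed.

Section AlphaConsequences.
Variable R : realType.
Local Notation rs := (rsign R).
Variables (V : lmodType R[i]) (nrm : V -> R) (P : V -> Prop).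
Hypothesis P0 : P 0.
Hypothesis PD : forall u v, P u -> P v -> P (u + v).
Hypothesis PZ : forall (c : R[i]) u, P u -> P (c *: u).
Variable Ca : R.
Hypothesis alphaP : forall n (a : 'I_n -> 'I_n -> R[i]) (x : 'I_n -> 'I_n -> V),
  (forall i j, P (x i j)) ->
  radrad nrm (fun i j => a i j *: x i j)
    <= Ca * (\big[Num.max/0]_(i < n) \big[Num.max/0]_(j < n) cnorm (a i j))
       * radrad nrm x.

Lemma P_lincomb (T : finType) (c : T -> R[i]) (y : T -> V) :
  (forall i, P (y i)) -> P (\sum_i c i *: y i).
Proof. by move=> Py; elim/big_ind: _ => // i _; apply: PZ. Qed.

Lemma alpha_radrad2_ord n (a : 'I_n -> 'I_n -> R[i]) (x : 'I_n -> 'I_n -> V) m :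
  (forall i j, P (x i j)) -> 0 <= m -> (forall i j, cnorm (a i j) <= m) ->
  radrad2 nrm (fun i j => a i j *: x i j) <= Ca ^+ 2 * m ^+ 2 * radrad2 nrm x.
Proof.
move=> Px m0 am; have := alphaP a Px; set M := \big[Num.max/0]_(i < n) _.
rewrite !radradE => le_alpha.
have M0 : 0 <= M by apply: bigmax_ge_id.
have Mm : M <= m by do 2!apply: bigmax_le => // ? _.
set s := Num.sqrt (radrad2 nrm x); have s0 : 0 <= s by apply: sqrtr_ge0.
have le_abs : Num.sqrt (radrad2 nrm (fun i j => a i j *: x i j)) <= `|Ca| * m * s.
  apply: (le_trans le_alpha); rewrite -!mulrA -/s.
  rewrite (le_trans (ler_wpM2r _ (real_ler_norm (num_real Ca)))) ?mulr_ge0 //.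
  by rewrite ler_wpM2l ?ler_wpM2r.
have := ler_pM (sqrtr_ge0 _) (sqrtr_ge0 _) le_abs le_abs.
rewrite -!expr2 sqr_sqrtr ?radrad2_ge0 // !exprMn real_normK ?num_real //.
by rewrite sqr_sqrtr ?radrad2_ge0.
Qed.

Lemma alpha_radrad2 (T U : finType) (a : T -> U -> R[i]) (x : T -> U -> V) m :
  (forall i j, P (x i j)) -> 0 <= m -> (forall i j, cnorm (a i j) <= m) ->
  radrad2 nrm (fun i j => a i j *: x i j) <= Ca ^+ 2 * m ^+ 2 * radrad2 nrm x.
Proof.
move=> Px m0 am.
have alpha_square (W : finType) (b : W -> W -> R[i]) (y : W -> W -> V) :
    (forall i j, P (y i j)) -> (forall i j, cnorm (b i j) <= m) ->
    radrad2 nrm (fun i j => b i j *: y i j) <= Ca ^+ 2 * m ^+ 2 * radrad2 nrm y.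
  move=> Py bm; have eb := enum_val_bij W.
  rewrite -[leLHS](radrad2_reindex _ _ eb eb) -(radrad2_reindex _ _ eb eb).
  exact: alpha_radrad2_ord.
rewrite -radrad2_corner -[radrad2 nrm x]radrad2_corner.
have -> : corner (fun i j => a i j *: x i j) = fun s t => corner a s t *: corner x s t.
  by apply/funext => -[i|i]; apply/funext => -[j|j] //=; rewrite scaler0.
by apply: alpha_square => -[i|i] [j|j] //=; rewrite ?cnorm0.
Qed.

Lemma rad2_contraction (T : finType) (a : T -> R[i]) (x : T -> V) m :
  (forall i, P (x i)) -> 0 <= m -> (forall i, cnorm (a i) <= m) ->
  rad2 nrm (fun i => a i *: x i) <= Ca ^+ 2 * m ^+ 2 * rad2 nrm x.
Proof.
move=> Px m0 am; rewrite -!radrad2_diag.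
have -> : diagf (fun i => a i *: x i) = fun i j => diagf a i j *: diagf x i j.
  by apply/funext => i; apply/funext => j; rewrite /diagf; case: eqP; rewrite ?scaler0.
by apply: alpha_radrad2 => // i j; rewrite /diagf; case: eqP; rewrite ?cnorm0.
Qed.

Lemma rad2_pair_le (T U : finType) (x : T -> U -> V) :
  (forall i j, P (x i j)) ->
  rad2 nrm (fun p : T * U => x p.1 p.2) <= Ca ^+ 2 * radrad2 nrm x.
Proof.
move=> Px; rewrite -avg_radrad2_signs -[leRHS](avg_cst _ (card_signs_gt0 (T * U)%type)).
apply: ler_avg => u; rewrite -[leRHS]mulr1 -(expr1n R 2) mulrAC.
by apply: alpha_radrad2 => // i j; rewrite cnorm_rsign.
Qed.

Lemma radrad2_le_rad2_pair (T U : finType) (x : T -> U -> V) :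
  (forall i j, P (x i j)) ->
  radrad2 nrm x <= Ca ^+ 2 * rad2 nrm (fun p : T * U => x p.1 p.2).
Proof.
move=> Px; rewrite -avg_radrad2_signs -avgZ.
rewrite -[leLHS](avg_cst _ (card_signs_gt0 (T * U)%type)); apply: ler_avg => u.
have -> : radrad2 nrm x =
    radrad2 nrm (fun i j => rs (u (i, j)) *: (rs (u (i, j)) *: x i j)).
  by congr radrad2; apply/funext => i; apply/funext => j; rewrite scalerA rsignMss scale1r.
rewrite -[leRHS]mulr1 -(expr1n R 2) mulrAC.
by apply: alpha_radrad2 => [i j|//|i j]; [apply: PZ | rewrite cnorm_rsign].
Qed.

Lemma Nd2_rad2_equiv d n (x : {ffun 'I_d.+1 -> 'I_n} -> V) :
  (forall i, P (x i)) ->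
  Nd2 nrm x <= (Ca ^+ 2) ^+ d * rad2 nrm x /\ rad2 nrm x <= (Ca ^+ 2) ^+ d * Nd2 nrm x.
Proof.
elim: d n x => [|d IH] n x Px; first by rewrite expr0 !mul1r Nd2_1.
have K0 : 0 <= Ca ^+ 2 by apply: sqr_ge0.
pose z J i := x (cons_ffun i J).
have Pz J i : P (z J i) by apply: Px.
have pair_bij : bijective (fun p : {ffun 'I_d.+1 -> 'I_n} * 'I_n => cons_ffun p.2 p.1).
  have [g g1 g2] := cons_ffun_bij d.+1 'I_n.
  exists (fun i => ((g i).2, (g i).1)) => [[J i]|i] /=; first by rewrite (g1 (i, J)).
  by rewrite -[RHS]g2; case: (g i).
have Py (t : {ffun 'I_n -> bool}) J : P (\sum_i rs (t i) *: x (cons_ffun i J)) by apply: P_lincomb.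
rewrite Nd2_cons -(rad2_reindex _ x pair_bij) exprS; split.
  apply: (le_trans (ler_avg (fun t => (IH _ _ (Py t)).1))).
  rewrite avgZ avg_rad2_signed_sum [_ * Ca ^+ 2 ^+ d]mulrC -mulrA ler_wpM2l ?(exprn_ge0 _ K0) //.
  exact: radrad2_le_rad2_pair.
apply: (le_trans (rad2_pair_le Pz)).
rewrite -avg_rad2_signed_sum -mulrA ler_wpM2l // -avgZ.
by apply: ler_avg => t; apply: (IH _ _ (Py t)).2.
Qed.

Lemma Nd_contraction d n (a : {ffun 'I_d.+1 -> 'I_n} -> R[i])
    (x : {ffun 'I_d.+1 -> 'I_n} -> V) :
  (forall i, P (x i)) ->
  Nd nrm (fun i => a i *: x i)
    <= `|Ca| ^+ (2 * d).+1 * (\big[Num.max/0]_i cnorm (a i)) * Nd nrm x.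
Proof.
move=> Px; set m := \big[Num.max/0]_i _; set c := `|Ca| ^+ _.
have m0 : 0 <= m by apply: bigmax_ge_id.
have am i : cnorm (a i) <= m by apply: le_bigmax.
have c0 : 0 <= c * m by rewrite mulr_ge0 ?exprn_ge0.
have K0 : 0 <= (Ca ^+ 2) ^+ d by rewrite exprn_ge0 ?sqr_ge0.
have [Nd2_le _] := Nd2_rad2_equiv (fun i => PZ (a i) (Px i)).
have [_ rad2_le] := Nd2_rad2_equiv Px.
have Nd2_ax : Nd2 nrm (fun i => a i *: x i) <= (c * m) ^+ 2 * Nd2 nrm x.
  apply: (le_trans Nd2_le).
  apply: (le_trans (ler_wpM2l K0 (rad2_contraction Px m0 am))).
  apply: (le_trans (ler_wpM2l K0 (ler_wpM2l _ rad2_le))); first by rewrite mulr_ge0 ?sqr_ge0.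
  by rewrite [(c * m) ^+ 2]exprMn sqr_norm_exp_odd le_eqVlt; apply/orP; left; apply/eqP; ring.
rewrite !NdE (le_trans (ler_wsqrtr Nd2_ax)) // sqrtrM ?sqr_ge0 // sqrtr_sqr ger0_norm //.
Qed.

End AlphaConsequences.

Section Dual.
Variable R : realType.
Variable X : completeNormedModType R[i].

Lemma normXE (x : X) : `|x| = (normX x)%:C.
Proof. by rewrite /normX RRe_real // ger0_real. Qed.

Lemma normX_ge0 (x : X) : 0 <= normX x.
Proof. by rewrite -ler0c -normXE. Qed.

Lemma normXZ (c : R[i]) (x : X) : normX (c *: x) = cnorm c * normX x.
Proof. by rewrite /normX normrZ [`|c|]cnormE normXE /= !mulr0 subr0. Qed.

Section DualElement.
Variable f : X -> R[i].
Hypothesis f_dual : is_dual f.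

Lemma dual_linear : linear f.
Proof. by case: f_dual => lin _ a x y; rewrite lin. Qed.

Let F : {linear X -> (R[i] : numFieldType)^o} :=
  HB.pack f (GRing.isLinear.Build _ _ _ _ f dual_linear).

Lemma dualZ (c : R[i]) x : f (c *: x) = c * f x.
Proof. exact: (linearZZ F). Qed.

Lemma dual_lincomb (T : finType) (c : T -> R[i]) (y : T -> X) :
  f (\sum_i c i *: y i) = \sum_i c i * f (y i).
Proof.
change (F (\sum_i c i *: y i) = \sum_i c i * F (y i)); rewrite linear_sum.
by apply: eq_bigr => i _; rewrite linearZZ.
Qed.

Lemma dual_bounded : exists2 M : R, 0 <= M & forall x, cnorm (f x) <= M * normX x.
Proof.
have : {for 0, continuous F} by apply: f_dual.2.
move=> /(continuous_linear_bounded 0)/linear_boundedP [M [Mreal FM]].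
exists (cnorm M + 1) => [|x]; first by rewrite addr_ge0 ?cnorm_ge0.
have := FM (`|M| + 1) _ x; rewrite -lecR rmorphM rmorphD /= -!cnormE -normXE.
by apply; rewrite (le_lt_trans (real_ler_norm Mreal)) // ltrDl.
Qed.

Lemma ler_dual_norm y : cnorm (f y) <= dual_norm f * normX y.
Proof.
have [M M0 fM] := dual_bounded.
pose S := [set cnorm (f x) | x in [set x : X | normX x <= 1]]%classic.
have supS : has_sup S.
  split; first by exists (cnorm (f 0)), 0 => //=; rewrite /normX normr0.
  exists M => _ [x /= x1 <-]; rewrite (le_trans (fM x)) //.
  by rewrite -[leRHS]mulr1 ler_wpM2l.
have [y0|y_neq0] := eqVneq (normX y) 0.
  by rewrite y0 mulr0 -(mulr0 M) -y0 fM.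
have y_pos : 0 < normX y by rewrite lt0r y_neq0 normX_ge0.
pose z := (normX y)^-1%:C *: y.
have Sz : S (cnorm (f z)).
  exists z => //=; rewrite normXZ cnorm_real ger0_norm ?invr_ge0 ?normX_ge0 //.
  by rewrite mulVf.
have := sup_upper_bound supS Sz; rewrite dualZ cnormM cnorm_real.
by rewrite ger0_norm ?invr_ge0 ?normX_ge0 // ler_pdivrMl // mulrC.
Qed.
End DualElement.

Lemma is_dual0 : is_dual (0 : X -> R[i]).
Proof. by split=> [a x y|x]; [rewrite /= mulr0 addr0 | apply: cst_continuous]. Qed.

Lemma is_dualD (f g : X -> R[i]) : is_dual f -> is_dual g -> is_dual (f + g).
Proof.
move=> [lf cf] [lg cg]; split=> [a x y|x]; last exact: (continuousD (cf x) (cg x)).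
change (f (a *: x + y) + g (a *: x + y) = a * (f x + g x) + (f y + g y)).
by rewrite lf lg mulrDr addrACA.
Qed.

Lemma is_dualZ (c : R[i]) (f : X -> R[i]) : is_dual f -> is_dual (c *: f).
Proof.
move=> [lf cf]; split=> [a x y|x]; last exact: (@continuousZl_tmp _ (R[i] : numFieldType)^o _ f c x (cf x)).
change (c * f (a *: x + y) = a * (c * f x) + c * f y).
by rewrite lf mulrDr mulrCA.
Qed.

End Dual.

Section Pairing.
Variable R : realType.
Variable X : completeNormedModType R[i].
Local Notation signs d n := {ffun 'I_d -> {ffun 'I_n -> bool}}.

Lemma sum_walsh_pairing d n (x : {ffun 'I_d -> 'I_n} -> X)
    (xs : {ffun 'I_d -> 'I_n} -> X -> R[i]) :
  (forall i, is_dual (xs i)) ->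
  \sum_(e : signs d n) (\sum_i walsh R e i *: xs i) (\sum_j walsh R e j *: x j) =
  #|signs d n|%:R * \sum_i xs i (x i).
Proof.
move=> xs_dual.
transitivity (\sum_(e : signs d n) \sum_i \sum_j walsh R e i * walsh R e j * xs i (x j)).
  apply: eq_bigr => e _; rewrite fct_sumE; apply: eq_bigr => i _.
  rewrite /= dual_lincomb; last exact: is_dualZ.
  by apply: eq_bigr => j _; rewrite /= mulrCA mulrA.
rewrite exchange_big mulr_sumr; apply: eq_bigr => i _ /=.
rewrite exchange_big (bigD1 i) //= -mulr_suml sum_walshM eqxx mul1r mulrC.
by rewrite big1 ?addr0 // => j /negbTE neq_ji; rewrite -mulr_suml sum_walshM eq_sym neq_ji !mul0r.
Qed.

Lemma ler_pairing_Nd d n (x : {ffun 'I_d -> 'I_n} -> X)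
    (xs : {ffun 'I_d -> 'I_n} -> X -> R[i]) :
  (forall i, is_dual (xs i)) ->
  cnorm (\sum_i xs i (x i)) <= Nd (@dual_norm R X) xs * Nd (@normX R X) x.
Proof.
move=> xs_dual; set N := #|signs d n|.
have N_gt0 : (0 : R) < N%:R.
  by rewrite ltr0n; apply/card_gt0P; exists [ffun _ => [ffun _ => true]].
pose F (e : signs d n) := \sum_i walsh R e i *: xs i.
pose Y (e : signs d n) := \sum_j walsh R e j *: x j.
have F_dual e : is_dual (F e).
  elim/big_ind: (F e) => [|f g|i _]; [exact: is_dual0 | exact: is_dualD | exact: is_dualZ].
set a := \sum_e dual_norm (F e) ^+ 2; set b := \sum_e normX (Y e) ^+ 2.
have a0 : 0 <= a by rewrite sumr_ge0 // => e _; rewrite sqr_ge0.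
have b0 : 0 <= b by rewrite sumr_ge0 // => e _; rewrite sqr_ge0.
have pairing_le : N%:R * cnorm (\sum_i xs i (x i)) <= Num.sqrt a * Num.sqrt b.
  rewrite -[N%:R]ger0_norm ?ler0n // -cnorm_real -cnormM rmorph_nat.
  rewrite -sum_walsh_pairing // (le_trans (ler_cnorm_sum _)) //.
  rewrite (le_trans _ (cauchy_schwarz _ _)) //.
  by apply: ler_sum => e _; apply: ler_dual_norm.
have -> : Nd (@dual_norm R X) xs * Nd (@normX R X) x = N%:R^-1 * (Num.sqrt a * Num.sqrt b).
  rewrite !NdE /Nd2 /avg -/N -/a -/b !sqrtrM ?invr_ge0 ?ler0n //.
  by rewrite mulrACA -expr2 sqr_sqrtr ?invr_ge0 ?ler0n.
by rewrite -(ler_pM2l N_gt0) mulrA mulfV ?mul1r ?gt_eqF.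
Qed.
End Pairing.

Section PropertyA.
Variable R : realType.
Variable X : completeNormedModType R[i].
Local Notation maxnorm a := (\big[Num.max/0]_i cnorm (a i)).

Lemma property_A_of_bound d (c : R) : 0 <= c ->
  (forall n (a : {ffun 'I_d -> 'I_n} -> R[i]) (x : {ffun 'I_d -> 'I_n} -> X) xs,
    (forall i, is_dual (xs i)) ->
    cnorm (\sum_i a i * xs i (x i))
      <= c * maxnorm a * Nd (@normX R X) x * Nd (@dual_norm R X) xs) ->
  property_A X d.
Proof.
move=> c0 bound; exists (c + 1); split=> [|n a x xs xs_dual].
  by rewrite ltr_wpDl.
apply: (le_trans (bound n a x xs xs_dual)).
rewrite !ler_wpM2r ?sqrtr_ge0 ?lerDl //.
exact: bigmax_ge_id.
Qed.

Lemma property_A_of_alpha d :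
  property_alpha (fun _ : X => True) (@normX R X) -> property_A X d.+1.
Proof.
case=> Ca alphaP; apply: (@property_A_of_bound _ (`|Ca| ^+ (2 * d).+1)) => [|n a x xs xs_dual].
  by rewrite exprn_ge0.
have -> : \sum_i a i * xs i (x i) = \sum_i xs i (a i *: x i).
  by apply: eq_bigr => i _; rewrite dualZ.
rewrite (le_trans (ler_pairing_Nd _ xs_dual)) // mulrC ler_wpM2r ?sqrtr_ge0 //.
by apply: (Nd_contraction (P := fun _ => True)).
Qed.

Lemma property_A_of_dual_alpha d :
  property_alpha (@is_dual R X) (@dual_norm R X) -> property_A X d.+1.
Proof.
case=> Ca alphaP; apply: (@property_A_of_bound _ (`|Ca| ^+ (2 * d).+1)) => [|n a x xs xs_dual].
  by rewrite exprn_ge0.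
have axs_dual i : is_dual (a i *: xs i) by apply: is_dualZ.
rewrite (le_trans (ler_pairing_Nd x axs_dual)) // mulrAC ler_wpM2r ?sqrtr_ge0 //.
exact: (Nd_contraction (@is_dual0 R X) (@is_dualD R X) (@is_dualZ R X) alphaP a xs_dual).
Qed.

End PropertyA.

Theorem proposition3p4 (R : realType) (X : completeNormedModType R[i]) :
  property_alpha (fun _ : X => True) (@normX R X) \/
  property_alpha (@is_dual R X) (@dual_norm R X) ->
  forall d : nat, (2 <= d)%N -> property_A X d.
Proof.
move=> alpha [//|d] _.
by case: alpha; [apply: property_A_of_alpha | apply: property_A_of_dual_alpha].
Qed.
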